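(* Let $G$ be the cube graph $Q_3$, let $P$ be a pot realizing $G$ according to Scenario 3, and let $\lambda$ be an assembly design of $G$ with $P_\lambda(G)\subseteq P$. Then every tile $t\in P$ satisfies $\lambda(v)=t$ for at most two distinct vertices $v$ of $G$.
   Context: Fix a set $\Sigma$ of symbols (bond-edge types) and a disjoint copy $\hat\Sigma=\{\hat a:a\in\Sigma\}$ with $\hat{\hat a}=a$; elements of $\Sigma\cup\hat\Sigma$ are cohesive-end types. A tile is a finite multiset of cohesive-end types. A pot is a finite set $P$ of tiles such that whenever $x$ occurs in a tile of $P$, $\hat x$ occurs in some tile of $P$. Graphs are finite, loops and multiple edges allowed. An assembly design of a graph $H$ is a labeling $\lambda$ of the half-edges of $H$ by cohesive-end types such that the two half-edges of each edge receive complementary labels $x,\hat x$; $\lambda(v)=t_v$ is the multiset of labels of half-edges at $v$, and $P_\lambda(H)=\{t_v\}$. $P$ realizes $H$ ($H\in\mathcal{O}(P)$) if some assembly design $\lambda$ has $P_\lambda(H)\subseteq P$. $P$ realizes $G$ according to Scenario 3 if $G\in\mathcal{O}(P)$, every $H\in\mathcal{O}(P)$ has $\#V(H)\ge\#V(G)$, and every $H\in\mathcal{O}(P)$ with $\#V(H)=\#V(G)$ is isomorphic to $G$. *)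

From mathcomp Require Import all_boot.
Set Implicit Arguments. Unset Strict Implicit. Unset Printing Implicit Defensive.

Section Defs.
Variable Sigma : eqType.

(* cohesive-end type: (a, false) = a, (a, true) = hat a *)
Definition cet := (Sigma * bool)%type.
Definition compl (x : cet) : cet := (x.1, ~~ x.2).

(* a tile is a finite multiset of cohesive-end types, represented by a
   sequence up to permutation (perm_eq) *)
Definition tile := seq cet.

Definition tile_in (t : tile) (P : seq tile) : bool := has (perm_eq t) P.

Definition is_pot (P : seq tile) : Prop :=
  forall t x, t \in P -> x \in t -> exists2 t', t' \in P & compl x \in t'.
End Defs.

(* finite graph with loops and multiple edges: vertices 'I_nv, edges listed
   (with multiplicity) as pairs of endpoints; edge i has a first half-edge at
   its first endpoint and a second half-edge at its second endpoint. *)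
Record graph := Graph { nv : nat; edges : seq ('I_nv * 'I_nv) }.

Definition edge_ix (G : graph) := 'I_(size (edges G)).

(* An assembly design is given by the label of the first half-edge of every
   edge; the second half-edge gets the complementary label. *)
Definition design (Sigma : eqType) (G : graph) := edge_ix G -> cet Sigma.

Definition tile_at (Sigma : eqType) (G : graph) (lam : design Sigma G)
  (v : 'I_(nv G)) : tile Sigma :=
  flatten [seq (if (nth (v, v) (edges G) (val i)).1 == v then [:: lam i] else [::])
            ++ (if (nth (v, v) (edges G) (val i)).2 == v then [:: compl (lam i)] else [::])
          | i : edge_ix G <- enum 'I_(size (edges G))].

Definition design_in (Sigma : eqType) (G : graph) (lam : design Sigma G)
  (P : seq (tile Sigma)) : Prop :=
  forall v : 'I_(nv G), tile_in (tile_at lam v) P.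

Definition realizes (Sigma : eqType) (P : seq (tile Sigma)) (H : graph) : Prop :=
  exists lam : design Sigma H, design_in lam P.

(* number of edges joining u and v (a loop at u counts once for u = v) *)
Definition mult (G : graph) (u v : 'I_(nv G)) : nat :=
  count (fun e => (e == (u, v)) || (e == (v, u))) (edges G).

Definition isomorphic (G H : graph) : Prop :=
  exists f : 'I_(nv G) -> 'I_(nv H),
    bijective f /\ forall u v, mult u v = mult (f u) (f v).

Definition scenario3 (Sigma : eqType) (P : seq (tile Sigma)) (G : graph) : Prop :=
  [/\ realizes P G,
      (forall H : graph, 0 < nv H -> realizes P H -> nv G <= nv H) &
      (forall H : graph, 0 < nv H -> realizes P H -> nv H = nv G -> isomorphic H G)].

(* the cube graph Q3 on vertices 0..7, u ~ v iff binary expansions differ in one bit *)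
Definition Q3_edges : seq ('I_8 * 'I_8) :=
  [seq (inord p.1, inord p.2) | p <- [:: (0,1); (0,2); (0,4); (1,3); (1,5); (2,3);
                                         (2,6); (3,7); (4,5); (4,6); (5,7); (6,7)]].
Definition Q3 : graph := @Graph 8 Q3_edges.

(* Suppose three distinct vertices A, B, C of Q3 carry the same tile.  Then
   every half-edge at A shares its label with some half-edge at B and some
   half-edge at C.  Exchanging the endpoints of two equally labelled half-edges
   gives another graph on eight vertices realized by P, which by Scenario 3 is
   isomorphic to Q3, hence simple and triangle-free; call such half-edges
   partners.  A finite check over Q3 shows this is impossible: the half-edge of
   A pointing to an adjacent B, and every half-edge of A when B is antipodal,
   has no partner at B (the exchange creates a loop or a triangle); otherwise
   partners are unique, and for some half-edge at A its partners at B and at C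
   are not partners of each other. *)

From mathcomp Require Import all_boot fingroup perm.
Set Implicit Arguments. Unset Strict Implicit. Unset Printing Implicit Defensive.

Section HalfEdges.
Variable G : graph.

Definition half := (edge_ix G * bool)%type.

Definition hend (h : half) : 'I_(nv G) :=
  let e := tnth (in_tuple (edges G)) h.1 in if h.2 then e.2 else e.1.

Section Labels.
Variables (Sigma : eqType) (lam : design Sigma G).

Definition hlabel (h : half) : cet Sigma :=
  if h.2 then compl (lam h.1) else lam h.1.

Lemma count_tile_at v (a : pred (cet Sigma)) :
  count a (tile_at lam v) = \sum_(h : half) ((hend h == v) && a (hlabel h)).
Proof.
rewrite /tile_at count_flatten sumnE !big_map.
transitivity (\sum_(i : edge_ix G) \sum_(b : bool) ((hend (i, b) == v) && a (hlabel (i, b))));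
  last exact: pair_bigA.
apply: eq_bigr => i _; rewrite big_bool count_cat /hend /= (tnth_nth (v, v)) addnC.
by case: (_ == v); case: (_ == v); rewrite /= ?addn0.
Qed.

Lemma tile_atP v x :
  reflect (exists2 h, hend h = v & hlabel h = x) (x \in tile_at lam v).
Proof.
rewrite -has_pred1 has_count count_tile_at lt0n sum_nat_eq0 negb_forall.
apply: (iffP existsP) => [[h]|[h <- <-]].
  by rewrite /= eqb0 negbK => /andP[/eqP hv /eqP hx]; exists h.
by exists h; rewrite /= !eqxx.
Qed.

Lemma hlabel_same_edge a b : a.1 = b.1 -> hlabel a = hlabel b -> a = b.
Proof.
case: a b => [i x] [j y] /= <-; rewrite /hlabel /compl /=.
by case: x; case: y => //; case: (lam i) => ? [] /= [].
Qed.

End Labels.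
End HalfEdges.

Section Rewire.
Variables (G : graph) (s : {perm half G}).

Definition rewire : graph :=
  @Graph (nv G) [seq (hend (s (i, false)), hend (s (i, true))) | i <- enum 'I_(size (edges G))].

Lemma size_rewire : size (edges rewire) = size (edges G).
Proof. by rewrite size_map size_enum_ord. Qed.

Definition rewire_ix (j : edge_ix rewire) : edge_ix G := cast_ord size_rewire j.

Lemma hend_rewire (h : half rewire) : hend h = hend (s (rewire_ix h.1, h.2)).
Proof.
case: h => j b; rewrite [LHS]/hend.
rewrite (tnth_nth (hend (s (rewire_ix j, b)), hend (s (rewire_ix j, b)))) /=.
rewrite (nth_map (rewire_ix j)); last by rewrite size_enum_ord; exact: ltn_ord (rewire_ix j).
by rewrite -[nat_of_ord j]/(nat_of_ord (rewire_ix j)) nth_ord_enum; case: b.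
Qed.

Variables (Sigma : eqType) (lam : design Sigma G).

Definition rewire_design : design Sigma rewire := fun j => lam (rewire_ix j).

Hypothesis s_hlabel : forall h, hlabel lam (s h) = hlabel lam h.

Lemma tile_at_rewire v : perm_eq (tile_at rewire_design v) (tile_at lam v).
Proof.
apply/seq.permP => a; rewrite !count_tile_at.
pose ix (h : half rewire) : half G := (rewire_ix h.1, h.2).
have ix_bij : bijective ix.
  exists (fun h : half G => (cast_ord (esym size_rewire) h.1, h.2)) => -[i b];
    by rewrite /ix /rewire_ix /= ?cast_ordK ?cast_ordKV.
rewrite [RHS](reindex (s \o ix)); last exact/onW_bij/bij_comp/ix_bij/injF_bij/perm_inj.
by apply: eq_bigr => h _; rewrite hend_rewire /= s_hlabel.
Qed.

Lemma realizes_rewire P : design_in lam P -> realizes P rewire.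
Proof.
move=> lamP; exists rewire_design => v; move: (lamP v); rewrite /tile_in.
by rewrite (eq_has (permPl (tile_at_rewire v))).
Qed.

End Rewire.

Lemma hlabel_tperm (G : graph) (Sigma : eqType) (lam : design Sigma G) (a b : half G) :
  hlabel lam a = hlabel lam b -> forall h, hlabel lam (tperm a b h) = hlabel lam h.
Proof. by move=> eq_ab h; case: tpermP => [->|->|]. Qed.

Lemma rewire_isomorphic (Sigma : eqType) (P : seq (tile Sigma)) (G : graph)
    (lam : design Sigma G) (s : {perm half G}) :
  0 < nv G -> scenario3 P G -> design_in lam P ->
  (forall h, hlabel lam (s h) = hlabel lam h) -> isomorphic (rewire s) G.
Proof. by move=> G_gt0 [_ _ iso] lamP s_hlabel; apply: iso => //; apply: realizes_rewire. Qed.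

(* [u], [v], [w] need not be distinct, so a loop counts as a triangle. *)
Definition simple_triangle_free (G : graph) : bool :=
  [forall u : 'I_(nv G), forall v : 'I_(nv G), (mult u v <= 1) &&
     [forall w : 'I_(nv G), ~~ [&& 0 < mult u v, 0 < mult v w & 0 < mult w u]]].

Lemma isomorphic_simple_triangle_free H G :
  isomorphic H G -> simple_triangle_free G -> simple_triangle_free H.
Proof.
case=> f [_ f_mult] /forallP G_stf; apply/forallP => u; apply/forallP => v.
have /forallP/(_ (f v))/andP[G_le1 /forallP G_tri] := G_stf (f u).
by rewrite f_mult G_le1; apply/forallP => w; rewrite !f_mult.
Qed.

Definition swappable (G : graph) (a b : half G) : bool :=
  (a.1 != b.1) && simple_triangle_free (rewire (tperm a b)).

Lemma swappable_of_hlabel (Sigma : eqType) (P : seq (tile Sigma)) (G : graph)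
    (lam : design Sigma G) (a b : half G) :
  0 < nv G -> simple_triangle_free G -> scenario3 P G -> design_in lam P ->
  hend a != hend b -> hlabel lam a = hlabel lam b -> swappable a b.
Proof.
move=> G_gt0 G_stf P_G lamP ab eq_ab; apply/andP; split.
  by apply: contra ab => /eqP/hlabel_same_edge/(_ eq_ab) ->.
apply: isomorphic_simple_triangle_free G_stf.
exact: rewire_isomorphic G_gt0 P_G lamP (hlabel_tperm eq_ab).
Qed.

(* Mirrors of the notions above on plain nat codes: [vm_compute] gets stuck on
   the opaque proofs carried by ordinals, and [eqn] is much faster than [==]. *)
Definition multn (E : seq (nat * nat)) (u v : nat) : nat :=
  count (fun e => (eqn e.1 u && eqn e.2 v) || (eqn e.1 v && eqn e.2 u)) E.

Definition simple_triangle_freen (n : nat) (E : seq (nat * nat)) : bool :=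
  all (fun u => all (fun v => (multn E u v <= 1) &&
    all (fun w => ~~ [&& 0 < multn E u v, 0 < multn E v w & 0 < multn E w u]) (iota 0 n))
  (iota 0 n)) (iota 0 n).

Definition nat_edges (G : graph) : seq (nat * nat) :=
  [seq (val e.1 : nat, val e.2 : nat) | e <- edges G].

Definition end_nat (E : seq (nat * nat)) (c : nat * bool) : nat :=
  let e := nth (0, 0) E c.1 in if c.2 then e.2 else e.1.

Definition transp (T : eqType) (x y z : T) : T :=
  if z == x then y else if z == y then x else z.

Definition rewire_nat (E : seq (nat * nat)) (x y : nat * bool) : seq (nat * nat) :=
  [seq (end_nat E (transp x y (k, false)), end_nat E (transp x y (k, true)))
  | k <- iota 0 (size E)].

Definition swappablen (n : nat) (E : seq (nat * nat)) (x y : nat * bool) : bool :=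
  (x.1 != y.1) && simple_triangle_freen n (rewire_nat E x y).

Lemma forall_ord_iota n (p : pred nat) : [forall i : 'I_n, p i] = all p (iota 0 n).
Proof.
rewrite -val_enum_ord all_map; apply/forallP/allP => [p_ord i _|p_ord i]; first exact: p_ord.
by apply: p_ord; rewrite mem_enum.
Qed.

Lemma mult_nat_edges (G : graph) (u v : 'I_(nv G)) : mult u v = multn (nat_edges G) u v.
Proof.
rewrite /mult /multn count_map; apply: eq_count => -[x y] /=.
by rewrite !xpair_eqE -!val_eqE /= !eqnE.
Qed.

Lemma simple_triangle_free_nat G :
  simple_triangle_free G = simple_triangle_freen (nv G) (nat_edges G).
Proof.
rewrite /simple_triangle_freen -forall_ord_iota; apply: eq_forallb => u.
rewrite -forall_ord_iota; apply: eq_forallb => v.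
rewrite -forall_ord_iota mult_nat_edges; congr (_ && _); apply: eq_forallb => w.
by rewrite !mult_nat_edges.
Qed.

Definition hcode (G : graph) (h : half G) : nat * bool := (val h.1, h.2).

Lemma hcode_inj G : injective (@hcode G).
Proof. by move=> [i b] [j c] [/val_inj -> ->]. Qed.

Lemma val_hend G (h : half G) : val (hend h) = end_nat (nat_edges G) (hcode h).
Proof.
case: h => i b; rewrite /hend /end_nat /nat_edges /=.
rewrite (nth_map (tnth (in_tuple (edges G)) i)) //.
by rewrite -(tnth_nth _ (in_tuple (edges G))); case: b.
Qed.

Lemma hcode_tperm G (a b h : half G) :
  hcode (tperm a b h) = transp (hcode a) (hcode b) (hcode h).
Proof.
rewrite /transp !(inj_eq (@hcode_inj G)).
case: tpermP => [->|->|/eqP/negbTE-> /eqP/negbTE->]; rewrite ?eqxx //.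
by case: eqP => [->|].
Qed.

Lemma nat_edges_rewire_tperm G (a b : half G) :
  nat_edges (rewire (tperm a b)) = rewire_nat (nat_edges G) (hcode a) (hcode b).
Proof.
rewrite /rewire_nat /nat_edges size_map -val_enum_ord -!map_comp.
by apply: eq_map => i /=; rewrite !val_hend !hcode_tperm.
Qed.

Lemma swappable_nat G (a b : half G) :
  swappable a b = swappablen (nv G) (nat_edges G) (hcode a) (hcode b).
Proof. by rewrite /swappable simple_triangle_free_nat nat_edges_rewire_tperm -val_eqE. Qed.

Definition hcodes (m : nat) : seq (nat * bool) :=
  [seq (k, b) | k <- iota 0 m, b <- [:: false; true]].

Lemma mem_hcodes G (a : half G) : hcode a \in hcodes (size (edges G)).
Proof. by case: a => i b; apply: allpairs_f; rewrite ?mem_iota ?ltn_ord //; case: b. Qed.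

Lemma hcodesP G x : x \in hcodes (size (edges G)) -> exists a : half G, hcode a = x.
Proof.
case/allpairsP => -[k b] [/=]; rewrite mem_iota => /andP[_ k_lt] _ ->.
by exists (Ordinal k_lt, b).
Qed.

Definition memo_table (T : eqType) (f : T -> T -> bool) (s : seq T) : seq (seq bool) :=
  [seq [seq f x y | y <- s] | x <- s].

Definition lookup (T : eqType) (tbl : seq (seq bool)) (s : seq T) (x y : T) : bool :=
  nth false (nth [::] tbl (index x s)) (index y s).

Lemma lookup_memo_table (T : eqType) (f : T -> T -> bool) (s : seq T) x y :
  x \in s -> y \in s -> lookup (memo_table f s) s x y = f x y.
Proof.
move=> xs ys; rewrite /lookup (nth_map x) ?index_mem // (nth_map y) ?index_mem //.
by rewrite !nth_index.
Qed.

Definition Q3_pairs : seq (nat * nat) :=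
  [:: (0,1); (0,2); (0,4); (1,3); (1,5); (2,3); (2,6); (3,7); (4,5); (4,6); (5,7); (6,7)].

Lemma nat_edges_Q3 : nat_edges Q3 = Q3_pairs.
Proof. by rewrite /nat_edges /= !inordK. Qed.

Lemma Q3_simple_triangle_free : simple_triangle_free Q3.
Proof. by rewrite simple_triangle_free_nat nat_edges_Q3; vm_compute. Qed.

Definition Q3_halves_at (A : nat) : seq (nat * bool) :=
  [seq c <- hcodes 12 | end_nat Q3_pairs c == A].

Definition Q3_swappable_table : seq (seq bool) :=
  memo_table (swappablen 8 Q3_pairs) (hcodes 12).

Lemma lookup_Q3_swappable_table (a b : half Q3) :
  lookup Q3_swappable_table (hcodes 12) (hcode a) (hcode b) = swappable a b.
Proof. by rewrite lookup_memo_table ?swappable_nat ?nat_edges_Q3 //; exact: mem_hcodes. Qed.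

(* [vm_compute] evaluates boolean connectives strictly, so [swappablen] is
   tabulated once instead of being recomputed for every triple. *)
Definition Q3_no_swappable_triple_check : bool :=
  let ok := lookup Q3_swappable_table (hcodes 12) in
  all (fun A => all (fun B => all (fun C => [&& A != B, B != C & C != A] ==>
    has (fun a => all (fun b => all (fun c => ~~ [&& ok a b, ok a c & ok b c])
      (Q3_halves_at C)) (Q3_halves_at B)) (Q3_halves_at A))
  (iota 0 8)) (iota 0 8)) (iota 0 8).

Lemma Q3_no_swappable_triple_checked : Q3_no_swappable_triple_check.
Proof. by vm_compute. Qed.

Lemma Q3_halves_atP (a : half Q3) : hcode a \in Q3_halves_at (hend a).
Proof. by rewrite mem_filter -nat_edges_Q3 -val_hend eqxx; exact: mem_hcodes. Qed.

Lemma Q3_no_swappable_triple (A B C : 'I_8) : A != B -> B != C -> C != A ->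
  exists2 a : half Q3, hend a = A & forall b c : half Q3, hend b = B -> hend c = C ->
    ~~ [&& swappable a b, swappable a c & swappable b c].
Proof.
move=> AB BC CA; have in8 (X : 'I_8) : val X \in iota 0 8 by rewrite mem_iota ltn_ord.
have := Q3_no_swappable_triple_checked; rewrite /Q3_no_swappable_triple_check.
move=> /allP/(_ _ (in8 A))/allP/(_ _ (in8 B))/allP/(_ _ (in8 C)).
rewrite !val_eqE AB BC CA => /hasP[x /[!mem_filter] /andP[xA /(@hcodesP Q3)[a ax]]].
move: xA; rewrite -{x}ax => aA no_triple.
exists a; first by apply: val_inj; rewrite val_hend nat_edges_Q3; exact: eqP aA.
move=> b c bB cC; rewrite -!lookup_Q3_swappable_table.
by apply: (allP (allP no_triple _ _)); rewrite -?bB -?cC; exact: Q3_halves_atP.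
Qed.

Unset Implicit Arguments.

Theorem lemma5 (Sigma : eqType) (P : seq (tile Sigma)) (lam : design Sigma Q3) :
  is_pot P -> scenario3 P Q3 -> design_in lam P ->
  forall t : tile Sigma, tile_in t P ->
    #|[set v : 'I_(nv Q3) | perm_eq (tile_at lam v) t]| <= 2.
Proof.
move=> _ P_Q3 lamP t _; rewrite leqNgt; apply/negP.
case/card_gt2P=> [A [B [C [[]]]]]; rewrite !inE => tA tB tC [AB BC CA].
have [a aA no_triple] := Q3_no_swappable_triple AB BC CA.
have same_label X :
    perm_eq (tile_at lam X) t -> exists2 x, hend x = X & hlabel lam x = hlabel lam a.
  by move=> tX; apply/tile_atP; rewrite (perm_mem tX) -(perm_mem tA); apply/tile_atP; exists a.
have [b bB ab] := same_label B tB; have [c cC ac] := same_label C tC.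
have ok := swappable_of_hlabel (isT : 0 < nv Q3) Q3_simple_triangle_free P_Q3 lamP.
by move/negP: (no_triple b c bB cC); apply; rewrite !ok ?aA ?bB ?cC // ?ab ?ac // eq_sym.
Qed.
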